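(* For real $x$ define $$D(x)=\int_0^{\infty}\left(\frac{e^{tx}+t x\,e^{tx}}{\left(1+e^{tx}\right)^2}-2x\,e^{-t x^2}\right)dt+\int_0^{\infty}\left(2t x^3 e^{-t x^2}-\frac{2t x\,e^{2tx}}{\left(1+e^{tx}\right)^3}\right)dt .$$ Then for every $x\neq 0$ both improper integrals converge and $D(x)=0$, while for $x=0$ the first integral diverges to $+\infty$ and the second equals $0$, so $D(0)=+\infty$. That is, $D$ takes the values of the Dirac delta function: $0$ for $x\ne0$ and $+\infty$ at $x=0$. *)

From Stdlib Require Import Reals.
From Coquelicot Require Import Coquelicot.
Open Scope R_scope.

Definition F1 (x t : R) : R :=
  (exp (t * x) + t * x * exp (t * x)) / (1 + exp (t * x)) ^ 2
  - 2 * x * exp (- (t * x ^ 2)).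

Definition F2 (x t : R) : R :=
  2 * t * x ^ 3 * exp (- (t * x ^ 2))
  - 2 * t * x * exp (2 * t * x) / (1 + exp (t * x)) ^ 3.

Definition improper_int_0_oo (f : R -> R) (l : R) : Prop :=
  is_RInt_gen f (at_point 0) (Rbar_locally p_infty) l.

Definition improper_int_0_oo_pinfty (f : R -> R) : Prop :=
  (forall b, ex_RInt f 0 b) /\ is_lim (fun b => RInt f 0 b) p_infty p_infty.

From Stdlib Require Import Reals Lra.
From Coquelicot Require Import Coquelicot.
Open Scope R_scope.

(** Write [σ] for the logistic function and [u = t x].  For [x <> 0] the first
    integrand is the [t]-derivative of [(g (t x) + 2 e^{-t x^2}) / x], where
    [g u = (1 + u) σ u - ln (1 + e^u)] is a primitive of [(1 + u) σ' u], and the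
    sum of both integrands is the [t]-derivative of [t σ'(t x) - 2 t x e^{-t x^2}],
    which vanishes at [t = 0] and at [+oo].  So both integrals converge and their
    sum is [0].  The limits at [+oo] reduce, through [u = t x] and the symmetries
    [σ (-u) = 1 - σ u] and [σ' (-u) = σ' u], to [e^u -> 0] and [u e^u -> 0] as
    [u -> -oo].  For [x = 0] the first integrand is the constant [1/4] and the
    second one vanishes. *)

Definition logistic (u : R) : R := exp u / (1 + exp u).

Definition dlogistic (u : R) : R := exp u / (1 + exp u) ^ 2.

Definition softplus (u : R) : R := ln (1 + exp u).

Definition prim_affine_dlogistic (u : R) : R := (1 + u) * logistic u - softplus u.

Lemma logistic_opp (u : R) : logistic (- u) = 1 - logistic u.
Proof.
  unfold logistic. rewrite exp_Ropp.
  pose proof (exp_pos u). field. lra.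
Qed.

Lemma dlogistic_opp (u : R) : dlogistic (- u) = dlogistic u.
Proof.
  unfold dlogistic. rewrite exp_Ropp.
  pose proof (exp_pos u). field. lra.
Qed.

Lemma softplus_opp (u : R) : softplus (- u) = softplus u - u.
Proof.
  unfold softplus.
  pose proof (exp_pos u).
  replace (1 + exp u) with (exp u * (1 + exp (- u))).
  - rewrite ln_mult, ln_exp; [ring | lra |].
    pose proof (exp_pos (- u)); lra.
  - rewrite exp_Ropp. field. lra.
Qed.

Lemma is_lim_comp_opp (f : R -> R) (l : Rbar) :
  is_lim f m_infty l -> is_lim (fun u => f (- u)) p_infty l.
Proof.
  intros Hf. apply (is_lim_comp f Ropp p_infty l m_infty); [exact Hf | |].
  - change m_infty with (Rbar_opp p_infty). apply is_lim_opp, is_lim_id.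
  - exists 0. intros; discriminate.
Qed.

Lemma is_lim_inv_1_plus_exp_m_infty : is_lim (fun u => / (1 + exp u)) m_infty 1.
Proof.
  replace (Finite 1) with (Rbar_inv (1 + 0)) by (simpl; f_equal; field).
  apply (is_lim_inv _ _ (1 + 0)); [| simpl; injection; lra].
  apply (is_lim_plus' _ _ _ 1 0); [apply is_lim_const | apply is_lim_exp_m].
Qed.

Lemma is_lim_logistic_m_infty : is_lim logistic m_infty 0.
Proof.
  replace (Finite 0) with (Finite (0 * 1)) by (f_equal; ring).
  apply (is_lim_mult _ _ _ 0 1);
    [apply is_lim_exp_m | apply is_lim_inv_1_plus_exp_m_infty | exact I].
Qed.

Lemma is_lim_id_mul_logistic_m_infty : is_lim (fun u => u * logistic u) m_infty 0.
Proof.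
  apply is_lim_ext with (fun u => u * exp u * / (1 + exp u)).
  { intros u. unfold logistic, Rdiv. ring. }
  replace (Finite 0) with (Finite (0 * 1)) by (f_equal; ring).
  apply (is_lim_mult _ _ _ 0 1);
    [apply is_lim_mul_exp_m | apply is_lim_inv_1_plus_exp_m_infty | exact I].
Qed.

Lemma is_lim_id_mul_dlogistic_m_infty : is_lim (fun u => u * dlogistic u) m_infty 0.
Proof.
  apply is_lim_ext with (fun u => u * exp u * (/ (1 + exp u) * / (1 + exp u))).
  { intros u. unfold dlogistic. pose proof (exp_pos u). field. lra. }
  replace (Finite 0) with (Finite (0 * (1 * 1))) by (f_equal; ring).
  apply (is_lim_mult _ _ _ 0 (1 * 1)); [apply is_lim_mul_exp_m | | exact I].
  apply (is_lim_mult _ _ _ 1 1);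
    [apply is_lim_inv_1_plus_exp_m_infty | apply is_lim_inv_1_plus_exp_m_infty | exact I].
Qed.

Lemma is_lim_softplus_m_infty : is_lim softplus m_infty 0.
Proof.
  replace (Finite 0) with (Finite (ln (1 + 0))) by (rewrite Rplus_0_r, ln_1; reflexivity).
  apply (is_lim_comp_continuous (fun u => 1 + exp u) ln).
  - apply (is_lim_plus' _ _ _ 1 0); [apply is_lim_const | apply is_lim_exp_m].
  - apply (ex_derive_continuous ln). auto_derive. lra.
Qed.

Lemma is_lim_prim_affine_dlogistic_m_infty : is_lim prim_affine_dlogistic m_infty 0.
Proof.
  apply is_lim_ext with (fun u => logistic u + u * logistic u - softplus u).
  { intros u. unfold prim_affine_dlogistic. ring. }
  replace (Finite 0) with (Finite (0 + 0 - 0)) by (f_equal; ring).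
  apply is_lim_minus'; [apply is_lim_plus' |].
  - apply is_lim_logistic_m_infty.
  - apply is_lim_id_mul_logistic_m_infty.
  - apply is_lim_softplus_m_infty.
Qed.

Lemma is_lim_prim_affine_dlogistic_p_infty : is_lim prim_affine_dlogistic p_infty 1.
Proof.
  apply is_lim_ext with
    (fun u => 1 - (logistic (- u) - (- u) * logistic (- u) + softplus (- u))).
  { intros u. unfold prim_affine_dlogistic.
    rewrite logistic_opp, softplus_opp. ring. }
  replace (Finite 1) with (Finite (1 - (0 - 0 + 0))) by (f_equal; ring).
  apply is_lim_minus'; [apply is_lim_const |].
  apply is_lim_comp_opp with (f := fun v => logistic v - v * logistic v + softplus v).
  apply is_lim_plus'; [apply is_lim_minus' |].
  - apply is_lim_logistic_m_infty.
  - apply is_lim_id_mul_logistic_m_infty.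
  - apply is_lim_softplus_m_infty.
Qed.

Lemma is_lim_id_mul_dlogistic_p_infty : is_lim (fun u => u * dlogistic u) p_infty 0.
Proof.
  apply is_lim_ext with (fun u => - ((- u) * dlogistic (- u))).
  { intros u. rewrite dlogistic_opp. ring. }
  replace (Finite 0) with (Rbar_opp 0) by (simpl; f_equal; ring).
  apply is_lim_opp, is_lim_comp_opp with (f := fun v => v * dlogistic v).
  apply is_lim_id_mul_dlogistic_m_infty.
Qed.

Lemma is_lim_comp_mulr_pos (f : R -> R) (x : R) (l : Rbar) :
  0 < x -> is_lim f p_infty l -> is_lim (fun t => f (t * x)) p_infty l.
Proof.
  intros Hx Hf. apply (is_lim_comp f (fun t => t * x) p_infty l p_infty); [exact Hf | |].
  - replace p_infty with (Rbar_mult p_infty x) at 2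
      by (apply is_Rbar_mult_unique, is_Rbar_mult_p_infty_pos; exact Hx).
    apply is_lim_scal_r, is_lim_id.
  - exists 0. intros; discriminate.
Qed.

Lemma is_lim_comp_mulr_neg (f : R -> R) (x : R) (l : Rbar) :
  x < 0 -> is_lim f m_infty l -> is_lim (fun t => f (t * x)) p_infty l.
Proof.
  intros Hx Hf. apply (is_lim_comp f (fun t => t * x) p_infty l m_infty); [exact Hf | |].
  - replace m_infty with (Rbar_mult p_infty x)
      by (apply is_Rbar_mult_unique, is_Rbar_mult_p_infty_neg; exact Hx).
    apply is_lim_scal_r, is_lim_id.
  - exists 0. intros; discriminate.
Qed.

Lemma is_lim_comp_mulr (f : R -> R) (x : R) (l : Rbar) : x <> 0 ->
  is_lim f p_infty l -> is_lim f m_infty l -> is_lim (fun t => f (t * x)) p_infty l.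
Proof.
  intros Hx Hp Hm. destruct (Rlt_or_le 0 x).
  - apply is_lim_comp_mulr_pos; assumption.
  - apply is_lim_comp_mulr_neg; [lra | exact Hm].
Qed.

Lemma is_lim_exp_decay (x : R) : x <> 0 ->
  is_lim (fun t => exp (- (t * x ^ 2))) p_infty 0.
Proof.
  intros Hx. pose proof (pow2_gt_0 x Hx).
  apply is_lim_ext with (fun t => exp (t * - x ^ 2)); [intros t; f_equal; ring |].
  apply (is_lim_comp_mulr_neg exp); [lra | apply is_lim_exp_m].
Qed.

Lemma is_lim_id_mul_exp_decay (x : R) : x <> 0 ->
  is_lim (fun t => t * x ^ 2 * exp (- (t * x ^ 2))) p_infty 0.
Proof.
  intros Hx. pose proof (pow2_gt_0 x Hx).
  apply is_lim_ext with (fun t => - (t * - x ^ 2 * exp (t * - x ^ 2))).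
  { intros t. replace (t * - x ^ 2) with (- (t * x ^ 2)) by ring. ring. }
  replace (Finite 0) with (Rbar_opp 0) by (simpl; f_equal; ring).
  apply is_lim_opp, (is_lim_comp_mulr_neg (fun u => u * exp u)); [lra |].
  apply is_lim_mul_exp_m.
Qed.

Definition prim_F1 (x t : R) : R :=
  (prim_affine_dlogistic (t * x) + 2 * exp (- (t * x ^ 2))) / x.

Definition prim_F1_F2 (x t : R) : R :=
  t * dlogistic (t * x) - 2 * t * x * exp (- (t * x ^ 2)).

Lemma ex_finite_lim_prim_F1 (x : R) :
  x <> 0 -> exists L : R, is_lim (prim_F1 x) p_infty L.
Proof.
  intros Hx.
  assert (HP : exists l : R,
             is_lim (fun t => prim_affine_dlogistic (t * x)) p_infty l).
  { destruct (Rlt_or_le 0 x).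
    - exists 1. apply is_lim_comp_mulr_pos;
        [assumption | apply is_lim_prim_affine_dlogistic_p_infty].
    - exists 0. apply is_lim_comp_mulr_neg;
        [lra | apply is_lim_prim_affine_dlogistic_m_infty]. }
  destruct HP as [l Hl]. exists ((l + 2 * 0) * / x).
  change (Finite ((l + 2 * 0) * / x)) with (Rbar_mult (l + 2 * 0) (/ x)).
  apply (is_lim_scal_r
           (fun t => prim_affine_dlogistic (t * x) + 2 * exp (- (t * x ^ 2)))).
  apply is_lim_plus'; [exact Hl |].
  apply (is_lim_scal_l _ 2 _ 0), is_lim_exp_decay, Hx.
Qed.

Lemma is_lim_prim_F1_F2 (x : R) : x <> 0 -> is_lim (prim_F1_F2 x) p_infty 0.
Proof.
  intros Hx.
  apply is_lim_ext with (fun t =>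
    (t * x * dlogistic (t * x) - 2 * (t * x ^ 2 * exp (- (t * x ^ 2)))) * / x).
  { intros t. unfold prim_F1_F2. field. exact Hx. }
  replace (Finite 0) with (Rbar_mult (0 - 2 * 0) (/ x)) by (simpl; f_equal; ring).
  apply is_lim_scal_r, is_lim_minus'.
  - apply (is_lim_comp_mulr (fun u => u * dlogistic u)); [exact Hx | |].
    + apply is_lim_id_mul_dlogistic_p_infty.
    + apply is_lim_id_mul_dlogistic_m_infty.
  - apply (is_lim_scal_l _ 2 _ 0), is_lim_id_mul_exp_decay, Hx.
Qed.

Lemma is_derive_prim_F1 (x t : R) : x <> 0 -> is_derive (prim_F1 x) t (F1 x t).
Proof.
  intros Hx. unfold prim_F1, prim_affine_dlogistic, logistic, softplus, F1.
  pose proof (exp_pos (t * x)).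
  auto_derive.
  - repeat split; lra.
  - replace (t * (x * (x * 1))) with (t * x ^ 2) by ring. field. lra.
Qed.

Lemma is_derive_prim_F1_F2 (x t : R) : is_derive (prim_F1_F2 x) t (F1 x t + F2 x t).
Proof.
  unfold prim_F1_F2, dlogistic, F1, F2.
  pose proof (exp_pos (t * x)).
  replace (exp (2 * t * x)) with (exp (t * x) * exp (t * x))
    by (rewrite <- exp_plus; f_equal; ring).
  auto_derive.
  - nra.
  - replace (t * (x * (x * 1))) with (t * x ^ 2) by ring. field. lra.
Qed.

Lemma continuous_F1 (x t : R) : continuous (F1 x) t.
Proof.
  apply (ex_derive_continuous (F1 x)). unfold F1.
  pose proof (exp_pos (t * x)). auto_derive. nra.
Qed.

Lemma continuous_F2 (x t : R) : continuous (F2 x) t.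
Proof.
  apply (ex_derive_continuous (F2 x)). unfold F2.
  pose proof (exp_pos (t * x)). auto_derive. nra.
Qed.

Lemma improper_int_0_oo_primitive (f G : R -> R) (L : R) :
  (forall t, is_derive G t (f t)) -> (forall t, continuous f t) ->
  is_lim G p_infty L -> improper_int_0_oo f (L - G 0).
Proof.
  intros HG Hf HL. unfold improper_int_0_oo.
  apply is_RInt_gen_ext with (Derive G).
  - apply filter_forall. intros ab t _. apply is_derive_unique, HG.
  - apply is_RInt_gen_Derive.
    + apply filter_forall. intros ab t _. eexists; apply HG.
    + apply filter_forall. intros ab t _.
      apply continuous_ext with f; [| apply Hf].
      intros s; symmetry; apply is_derive_unique, HG.
    + intros P HP. unfold filtermap, at_point. apply locally_singleton, HP.
    + exact HL.
Qed.

Lemma improper_int_0_oo_pinfty_const (f : R -> R) (c : R) :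
  0 < c -> (forall t, f t = c) -> improper_int_0_oo_pinfty f.
Proof.
  intros Hc Hf. split.
  - intros b. apply ex_RInt_ext with (fun _ => c); [intros; symmetry; apply Hf |].
    apply ex_RInt_const.
  - apply is_lim_ext with (fun b => b * c).
    { intros b. rewrite (RInt_ext _ (fun _ => c)) by (intros; apply Hf).
      rewrite RInt_const. unfold scal; simpl; unfold mult; simpl. ring. }
    apply (is_lim_comp_mulr_pos (fun t => t)); [exact Hc | apply is_lim_id].
Qed.

Lemma F1_0 (t : R) : F1 0 t = / 4.
Proof. unfold F1. rewrite Rmult_0_r, exp_0. field. Qed.

Lemma F2_0 (t : R) : F2 0 t = 0.
Proof. unfold F2, Rdiv. ring. Qed.

Theorem mainTheorem7 :
  (forall x : R, x <> 0 ->
     exists I1 I2 : R,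
       improper_int_0_oo (F1 x) I1 /\ improper_int_0_oo (F2 x) I2 /\
       I1 + I2 = 0)
  /\ improper_int_0_oo_pinfty (F1 0)
  /\ improper_int_0_oo (F2 0) 0.
Proof.
  split; [| split].
  - intros x Hx. destruct (ex_finite_lim_prim_F1 x Hx) as [L HL].
    exists (L - prim_F1 x 0), ((0 - L) - (prim_F1_F2 x 0 - prim_F1 x 0)).
    split; [| split].
    + apply improper_int_0_oo_primitive;
        [intros; apply is_derive_prim_F1, Hx | apply continuous_F1 | exact HL].
    + apply (improper_int_0_oo_primitive _ (fun t => prim_F1_F2 x t - prim_F1 x t)).
      * intros t. replace (F2 x t) with ((F1 x t + F2 x t) - F1 x t) by ring.
        apply (is_derive_minus (prim_F1_F2 x) (prim_F1 x));
          [apply is_derive_prim_F1_F2 | apply is_derive_prim_F1, Hx].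
      * apply continuous_F2.
      * apply is_lim_minus'; [apply is_lim_prim_F1_F2, Hx | exact HL].
    + unfold prim_F1_F2. rewrite !Rmult_0_l, Rmult_0_r. ring.
  - apply (improper_int_0_oo_pinfty_const _ (/ 4)); [lra | apply F1_0].
  - replace 0 with (0 - 0) at 2 by ring.
    apply (improper_int_0_oo_primitive _ (fun _ => 0)).
    + intros t. rewrite F2_0. apply (is_derive_const (V := R_NormedModule) 0).
    + apply continuous_F2.
    + apply is_lim_const.
Qed.
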